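(* Let $X \to Y$ be a relative cell complex in $\mathbf{PsTop}$. Then every compact subset $C$ of $Y$ intersects the interiors of only finitely many cells of $Y - X$.
   Context: A convergence space is a set with a relation between filters and points ($\lambda\to x$) such that $\lambda\to x$, $\lambda\subseteq\lambda'$ imply $\lambda'\to x$, and $\dot x\to x$; it is pseudotopological iff $\lambda\to x$ exactly when every ultrafilter containing $\lambda$ converges to $x$. Continuous maps: $\lambda\to x$ implies $f(\lambda)\to f(x)$. $\mathbf{PsTop}$ is the category of pseudotopological spaces; topological spaces (in particular $D^n$, $S^{n-1}$) are regarded as pseudotopological by $\lambda\to x$ iff $\lambda$ contains the neighbourhood filter of $x$; subspaces carry the induced structure ($\lambda\to x$ in $U$ iff the filter generated in $X$ converges to $x$), and colimits carry final structures in $\mathbf{PsTop}$. A subset is compact iff, with its subspace structure, every ultrafilter on it converges. $Y$ is obtained from $X$ by attaching a cell if $X$ is a subspace of $Y$ and there is a pushout square in $\mathbf{PsTop}$ with $S^{n-1}\to X$, $S^{n-1}\hookrightarrow D^n$, $D^n \to Y$, $X \to Y$, for some $n\geq 0$ ($S^{-1}=\emptyset$, $D^0$ a point). A continuous map $f : X \to Y$ is a relative cell complex if it is an inclusion and $Y$ is constructed from $X$ by a (possibly transfinite) sequence of cell attachments (with colimits at limit stages). The interior of a cell is the image of $D^n\setminus S^{n-1}$ in $Y$; the cells of $Y - X$ are those attached in this construction. *)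

From HB Require Import structures.
From mathcomp Require Import all_boot all_order all_algebra.
From mathcomp Require Import all_classical all_reals topology normedtype.
Set Implicit Arguments. Unset Strict Implicit. Unset Printing Implicit Defensive.
Import Order.TTheory GRing.Theory Num.Theory.
Import numFieldNormedType.Exports.
Local Open Scope classical_set_scope.
Local Open Scope ring_scope.

Definition pfilter {T : Type} (F : set_system T) : Prop :=
  F setT /\ ~ F set0 /\
  (forall A B, F A -> F B -> F (A `&` B)) /\
  (forall A B, A `<=` B -> F A -> F B).

Definition ultra {T : Type} (F : set_system T) : Prop :=
  pfilter F /\ forall G, pfilter G -> F `<=` G -> G = F.

Definition principal {T : Type} (x : T) : set_system T := [set A | A x].

Definition imf {T U : Type} (f : T -> U) (F : set_system T) : set_system U :=
  [set B | F (f @^-1` B)].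

(** A space is represented by (A, c) where A : set T is its underlying set and
   c F x means "F -> x".  A filter on A is identified with the filter on T it
   generates, i.e. with a proper filter on T containing A. *)
Definition convT (T : Type) := set_system T -> T -> Prop.

Definition is_conv {T : Type} (A : set T) (c : convT T) : Prop :=
  (forall F x, c F x -> pfilter F /\ F A /\ A x) /\
  (forall F G x, c F x -> pfilter G -> F `<=` G -> c G x) /\
  (forall x, A x -> c (principal x) x).

Definition is_pstop {T : Type} (A : set T) (c : convT T) : Prop :=
  is_conv A c /\
  forall F x, pfilter F -> F A -> A x ->
    (c F x <-> (forall U, ultra U -> F `<=` U -> c U x)).

Definition cont {T U : Type} (A : set T) (c : convT T) (B : set U) (d : convT U)
  (f : T -> U) : Prop :=
  (forall x, A x -> B (f x)) /\ (forall F x, c F x -> d (imf f F) (f x)).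

Definition subsp {T : Type} (c : convT T) (B : set T) : convT T :=
  fun F x => F B /\ B x /\ c F x.

Definition topc {V : topologicalType} (D : set V) : convT V :=
  fun F x => pfilter F /\ F D /\ D x /\ nbhs x `<=` F.

Definition sqnorm {R : realType} {n : nat} (v : 'rV[R]_n) : R :=
  \sum_(i < n) (v ord0 i) ^+ 2.
Definition disk {R : realType} (n : nat) : set 'rV[R]_n := [set v | sqnorm v <= 1].
Definition sphere {R : realType} (n : nat) : set 'rV[R]_n := [set v | sqnorm v = 1].
Definition odisk {R : realType} (n : nat) : set 'rV[R]_n := [set v | sqnorm v < 1].
Arguments disk {R} n _.
Arguments sphere {R} n _.
Arguments odisk {R} n _.

(** (Sb,cb) is obtained from (Sa,ca) by attaching an n-cell, with attaching map
   phi : S^{n-1} -> Sa and characteristic map Phi : D^n -> Sb, the inclusion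
   Sa -> Sb being the identity of T: Sa is a subspace of Sb and the square
   is a pushout in PsTop (universal property). *)
Definition pushout_med {R : realType} {T U : Type} (n : nat)
  (Sa Sb : set T) (cb : convT T) (Phi : 'rV[R]_n -> T)
  (B : set U) (d : convT U) (g : T -> U) (h : 'rV[R]_n -> U) (k : T -> U) : Prop :=
  cont Sb cb B d k /\ (forall y, Sa y -> k y = g y) /\
  (forall v, disk n v -> k (Phi v) = h v).

Definition attaches {R : realType} {T : Type} (Sa : set T) (ca : convT T)
  (Sb : set T) (cb : convT T) (n : nat) (phi Phi : 'rV[R]_n -> T) : Prop :=
  Sa `<=` Sb /\
  (forall F x, ca F x <-> subsp cb Sa F x) /\
  cont (sphere n) (topc (sphere n)) Sa ca phi /\
  cont (disk n) (topc (disk n)) Sb cb Phi /\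
  (forall v, sphere n v -> Phi v = phi v) /\
  (forall (U : Type) (B : set U) (d : convT U) (g : T -> U) (h : 'rV[R]_n -> U),
     is_pstop B d -> cont Sa ca B d g -> cont (disk n) (topc (disk n)) B d h ->
     (forall v, sphere n v -> h v = g (phi v)) ->
     (exists k, pushout_med Sa Sb cb Phi B d g h k) /\
     (forall k1 k2, pushout_med Sa Sb cb Phi B d g h k1 ->
                    pushout_med Sa Sb cb Phi B d g h k2 ->
                    forall y, Sb y -> k1 y = k2 y)).

Definition colim_med {I T U : Type} (J : set I) (S : I -> set T)
  (Sb : set T) (cb : convT T) (B : set U) (d : convT U)
  (g : I -> T -> U) (k : T -> U) : Prop :=
  cont Sb cb B d k /\ (forall i, J i -> forall y, S i y -> k y = g i y).

Definition is_colim {I T : Type} (lt : I -> I -> Prop) (J : set I)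
  (S : I -> set T) (c : I -> convT T) (Sb : set T) (cb : convT T) : Prop :=
  (forall i, J i -> cont (S i) (c i) Sb cb id) /\
  (forall (U : Type) (B : set U) (d : convT U) (g : I -> T -> U),
     is_pstop B d ->
     (forall i, J i -> cont (S i) (c i) B d (g i)) ->
     (forall i j, J i -> J j -> lt i j -> forall y, S i y -> g j y = g i y) ->
     (exists k, colim_med J S Sb cb B d g k) /\
     (forall k1 k2, colim_med J S Sb cb B d g k1 -> colim_med J S Sb cb B d g k2 ->
        forall y, Sb y -> k1 y = k2 y)).

Definition is_pred {I : Type} (lt : I -> I -> Prop) (i j : I) : Prop :=
  lt i j /\ forall k, lt k j -> k = i \/ lt k i.

(** A presentation of the pseudotopological space Y = (setT, cY) on T as a
   relative cell complex relative to the subspace X : set T: a transfinite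
   sequence (indexed by a well-ordered type) of stages (stage i, sconv i),
   all subsets of T with inclusions as transition maps, stage i0 = X (with its
   subspace structure), successor stages obtained by attaching one cell,
   limit stages colimits, and Y the colimit of the whole sequence. *)
Record rel_cell_complex (R : realType) (T : Type) (cY : convT T) (X : set T) := {
  idx : Type;
  ilt : idx -> idx -> Prop;
  ilt_irrefl : forall i, ~ ilt i i;
  ilt_trans : forall i j k, ilt i j -> ilt j k -> ilt i k;
  ilt_total : forall i j, ilt i j \/ i = j \/ ilt j i;
  ilt_wf : well_founded ilt;
  i0 : idx;
  i0_least : forall i, i = i0 \/ ilt i0 i;
  stage : idx -> set T;
  sconv : idx -> convT T;
  stage_pstop : forall i, is_pstop (stage i) (sconv i);
  stage_incl : forall i j, ilt i j ->
     stage i `<=` stage j /\ cont (stage i) (sconv i) (stage j) (sconv j) id;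
  stage0_set : stage i0 = X;
  stage0_conv : forall F x, sconv i0 F x <-> subsp cY X F x;
  dim : idx -> nat;
  att : forall j, 'rV[R]_(dim j) -> T;
  chr : forall j, 'rV[R]_(dim j) -> T;
  succ_step : forall i j, is_pred ilt i j ->
     @attaches R T (stage i) (sconv i) (stage j) (sconv j) (dim j) (@att j) (@chr j);
  limit_step : forall j, j <> i0 -> (forall i, ~ is_pred ilt i j) ->
     is_colim ilt [set i | ilt i j] stage sconv (stage j) (sconv j);
  final_colim : is_colim ilt setT stage sconv setT cY
}.
Arguments att {R T cY X} r j _.
Arguments chr {R T cY X} r j _.
Arguments dim {R T cY X} r j.

(** The cells of Y - X are indexed by the successor indices j; the interior
    of the cell j is chr j (D^n \ S^{n-1}). *)
Definition is_cell_idx {R T cY X} (P : @rel_cell_complex R T cY X) (j : idx P) : Prop :=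
  exists i, is_pred (@ilt _ _ _ _ P) i j.

Definition cell_interior {R T cY X} (P : @rel_cell_complex R T cY X) (j : idx P) : set T :=
  [set chr P j v | v in odisk (dim P j)].

Definition compactP {T : Type} (c : convT T) (C : set T) : Prop :=
  forall U, ultra U -> U C -> exists x, subsp c C U x.
Arguments is_cell_idx {R T cY X} P j.
Arguments cell_interior {R T cY X} P j _.

(* Suppose infinitely many open cells meet C and pick a point of C in each of
   them: this gives an infinite set S, disjoint from X, that meets every open
   cell at most once.  Such an S is closed and discrete in Y, i.e. the identity
   of Y is continuous into the structure on T in which T \ (S \ {y}) is the
   least neighbourhood of y.  This is checked stage by stage, by transfinite
   induction: at a successor stage the characteristic map is continuous into
   that structure (it is continuous on the sphere and injective on the open
   disk), and the pushout property glues; at limit stages and for Y the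
   colimit property glues.  But a compact set contains no infinite closed
   discrete set: an ultrafilter refining the cofinite filter on S converges to
   some x, yet contains both S \ {x} and its complement. *)

From Pilot Require Import Defs.
From mathcomp Require Import all_boot all_order all_algebra.
From mathcomp Require Import all_classical all_reals topology normedtype.
Local Open Scope classical_set_scope.
Import Order.TTheory.
Import numFieldNormedType.Exports.

Set Implicit Arguments. Unset Strict Implicit.

(* [pfilter] and [dim] would otherwise resolve to MathComp-Analysis and
   MathComp constants. *)
Local Notation pfilter := Defs.pfilter.
Local Notation dim := Defs.dim.

Section ProperFilters.
Context {T : Type}.
Implicit Types (F : set_system T) (A B : set T).

Lemma pfilterT F : pfilter F -> F setT.
Proof. by case. Qed.

Lemma pfilter_set0 F : pfilter F -> ~ F set0.
Proof. by move=> [_ []]. Qed.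

Lemma pfilterI F A B : pfilter F -> F A -> F B -> F (A `&` B).
Proof. by move=> [_ [_ [FI _]]]; apply: FI. Qed.

Lemma pfilterS F A B : pfilter F -> A `<=` B -> F A -> F B.
Proof. by move=> [_ [_ [_ FS]]]; apply: FS. Qed.

Lemma pfilterP F : pfilter F <-> ProperFilter F.
Proof.
split=> [[FT [F0 [FI FS]]]|PF]; first by split => //; split.
split; first exact: filterT.
split; first exact: filter_not_empty.
by split; [exact: filterI | exact: filterS].
Qed.

Lemma principal_pfilter (x : T) : pfilter (principal x).
Proof. by split => //; split => //; split => [A B|A B /[apply]]; [split|]. Qed.

Lemma imf_pfilter U (f : T -> U) F : pfilter F -> pfilter (imf f F).
Proof.
move=> [FT [F0 [FI FS]]]; split => //; split => //.
by split=> [A B|A B AB]; [exact: FI | apply: FS => y /AB].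
Qed.

Lemma pfilter_ultra F : pfilter F -> exists2 U, ultra U & F `<=` U.
Proof.
move=> /pfilterP PF; have [U [UU FU]] := ultraFilterLemma PF.
exists U => //; split=> [|G /pfilterP PG]; first by apply/pfilterP; exact: ultra_proper.
exact: max_filter.
Qed.

Lemma pfilter_ultra_setC F A : pfilter F -> ~ F A ->
  exists U, [/\ ultra U, F `<=` U & U (~` A)].
Proof.
move=> pF nFA; pose G := [set Z | exists2 Y, F Y & Y `&` ~` A `<=` Z].
have pG : pfilter G.
  split; first by exists setT; [exact: pfilterT|].
  split.
    move=> [Y FY YA]; apply: nFA; apply: pfilterS pF _ FY => y Yy.
    by apply: contrapT => nAy; exact: YA y (conj Yy nAy).
  split=> [Z1 Z2 [Y1 F1 s1] [Y2 F2 s2]|Z1 Z2 Z12 [Y FY YZ]].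
    exists (Y1 `&` Y2); first exact: pfilterI.
    by move=> y [[y1 y2] nA]; split; [exact: s1 | exact: s2].
  by exists Y => // y /YZ /Z12.
have [U UU GU] := pfilter_ultra pG.
exists U; split=> //; last by apply: GU; exists setT; [exact: pfilterT | move=> y []].
by move=> Z FZ; apply: GU; exists Z => // y [].
Qed.

Lemma pfilter_ultraP F A : pfilter F ->
  F A <-> forall U, ultra U -> F `<=` U -> U A.
Proof.
move=> pF; split=> [FA U _ FU|UA]; first exact: FU.
apply: contrapT => nFA; have [U [UU FU UnA]] := pfilter_ultra_setC pF nFA.
have [pU _] := UU.
by apply: (pfilter_set0 pU); apply: pfilterS pU _ (pfilterI pU (UA U UU FU) UnA) => y [].
Qed.

End ProperFilters.

Lemma pstop_conv T (A : set T) c F x : is_pstop A c -> c F x -> [/\ pfilter F, F A & A x].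
Proof. by move=> [[h _] _] /h [? []]. Qed.

Lemma cont_comp T U V (A : set T) (B : set U) (D : set V) a b d f g :
  cont A a B b f -> cont B b D d g -> cont A a D d (g \o f).
Proof. by move=> [fAB fc] [gBD gc]; split=> [x /fAB /gBD|F x /fc /gc]. Qed.

Definition least_nbhd_conv {T} (N : T -> set T) : convT T :=
  fun F x => pfilter F /\ F (N x).

Section LeastNbhd.
Context {T : Type} (N : T -> set T).
Hypothesis N_refl : forall x, N x x.

Lemma least_nbhd_pstop : is_pstop setT (least_nbhd_conv N).
Proof.
split; first split.
- by move=> F x [pF _]; split => //; split => //; exact: pfilterT.
- split=> [F G x [_ FN] pG FG|x _]; first by split => //; exact: FG.
  by split; [exact: principal_pfilter | exact: N_refl].
move=> F x pF _ _; split=> [[_ FN] U [pU _] FU|UN]; first by split => //; exact: FU.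
by split=> //; apply/(pfilter_ultraP _ pF) => U UU FU; have [] := UN U UU FU.
Qed.

Lemma cont_least_nbhd U (A : set U) c f : is_conv A c ->
  (forall F x, c F x -> F (f @^-1` N (f x))) ->
  cont A c setT (least_nbhd_conv N) f.
Proof.
move=> [c_pf _] fN; split => // F x cF; split; last exact: fN.
by have [pF _] := c_pf _ _ cF; exact: imf_pfilter.
Qed.

Lemma cont_least_nbhd_id (A : set T) c k : is_conv A c ->
  cont A c setT (least_nbhd_conv N) k -> (forall y, A y -> k y = y) ->
  cont A c setT (least_nbhd_conv N) id.
Proof.
move=> Ac [_ kc] kA; apply: cont_least_nbhd => // F y cF.
have [c_pf _] := Ac; have [pF [FA Ay]] := c_pf _ _ cF.
have [_ FkN] := kc _ _ cF.
apply: pfilterS pF _ (pfilterI pF FkN FA) => u [Nu Au].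
by move: Nu; rewrite /= (kA y Ay) (kA u Au).
Qed.

End LeastNbhd.

Lemma cont_indiscrete T U (A : set T) c (f : T -> U) :
  is_conv A c -> cont A c setT (least_nbhd_conv (fun _ => setT)) f.
Proof.
move=> Ac; apply: cont_least_nbhd => // F x cF.
by have [c_pf _] := Ac; have [pF _] := c_pf _ _ cF; exact: pfilterT.
Qed.

Lemma topc_conv (V : topologicalType) (D : set V) : is_conv D (topc D).
Proof.
split=> [F x [pF [FD [Dx _]]]|]; first by [].
split=> [F G x [pF [FD [Dx nF]]] pG FG|x Dx].
  by split=> //; split; [exact: FG | split=> // A /nF /FG].
split; first exact: principal_pfilter.
by split=> //; split=> // A; exact: nbhs_singleton.
Qed.

Lemma topc_within (V : topologicalType) (D : set V) v :
  D v -> topc D (within D (nbhs v)) v.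
Proof.
move=> Dv; split.
  by apply/pfilterP; apply: within_nbhs_proper; exact: subset_closure.
split; first exact: withinT.
by split=> // A; apply: filterS => x Ax _.
Qed.

Lemma nbhs_setC_subset1 (V : topologicalType) (E : set V) v :
  accessible_space V -> is_subset1 E -> ~ E v -> nbhs v (~` E).
Proof.
move=> acc sE nEv; have [[w Ew]|nE] := pselect (E !=set0); last first.
  by apply: filterS filterT => u _ Eu; apply: nE; exists u.
apply: (@filterS _ _ _ (~` [set w])) => [u uw Eu|]; first exact/uw/sE.
apply: open_nbhs_nbhs; split; first by rewrite openC; exact: accessible_closed_set1.
by move=> vw; apply: nEv; rewrite vw.
Qed.

Section Euclidean.
Context {R : realType} (n : nat).
Implicit Types v : 'rV[R]_n.
Local Open Scope ring_scope.

Lemma rV_accessible : accessible_space 'rV[R]_n.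
Proof. exact/hausdorff_accessible/norm_hausdorff. Qed.

Lemma sqnorm_continuous : continuous (@sqnorm R n).
Proof.
apply: continuous_big => [|i _ v]; first exact: add_continuous.
by apply: continuousM; exact: (@coord_continuous R 1 n ord0 i).
Qed.

Lemma odisk_open : open (odisk n : set 'rV[R]_n).
Proof.
rewrite (_ : odisk n = sqnorm @^-1` [set x | x < 1]) //.
by apply: open_comp; [move=> v _; exact: sqnorm_continuous | exact: open_lt].
Qed.

Lemma disk_sphere_odisk v : disk n v -> sphere n v \/ odisk n v.
Proof. by rewrite /disk /sphere /odisk /= le_eqVlt => /orP[/eqP|]; [left|right]. Qed.

Lemma sphere_odisk v : sphere n v -> ~ odisk n v.
Proof. by rewrite /sphere /odisk /= => ->; rewrite ltxx. Qed.

Lemma odisk_disk v : odisk n v -> disk n v.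
Proof. exact: ltW. Qed.

End Euclidean.

(* The constant map [false] and the indicator of the uncovered points are both
   mediating maps into the indiscrete two-point space, so they agree.
   [attach_cover] is the same argument for a pushout. *)
Lemma colim_cover Ix T lt (J : set Ix) (S : Ix -> set T) c Sb cb :
  (forall i, J i -> is_pstop (S i) (c i)) -> is_pstop Sb cb ->
  is_colim lt J S c Sb cb -> Sb `<=` \bigcup_(i in J) S i.
Proof.
move=> S_pstop Sb_pstop [_ univ] y Sby; apply: contrapT => ncov.
pose indiscrete := least_nbhd_conv (fun _ : bool => setT).
have [_ uniq] := univ bool setT indiscrete (fun _ _ => false)
  (least_nbhd_pstop (fun _ => I)) (fun i Ji => cont_indiscrete _ (S_pstop i Ji).1)
  (fun _ _ _ _ _ _ _ => erefl).
suff : false = ~~ `[< (\bigcup_(i in J) S i) y >] by rewrite asboolF.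
apply: (uniq (fun=> false) (fun z => ~~ `[< (\bigcup_(i in J) S i) z >])) Sby.
- by split; [exact: cont_indiscrete Sb_pstop.1 | by []].
split; first exact: cont_indiscrete Sb_pstop.1.
by move=> i Ji z Siz; rewrite asboolT //; exists i.
Qed.

Section Attaching.
Context {R : realType} {T : Type} (n : nat) (Sa Sb : set T) (ca cb : convT T).
Context (phi Phi : 'rV[R]_n -> T).
Hypotheses (Sa_pstop : is_pstop Sa ca) (Sb_pstop : is_pstop Sb cb).
Hypothesis attach : attaches Sa ca Sb cb phi Phi.

Lemma attach_cover : Sb `<=` Sa `|` Phi @` disk n.
Proof.
have [_ [_ [_ [_ [_ univ]]]]] := attach; move=> y Sby; apply: contrapT => ncov.
pose indiscrete := least_nbhd_conv (fun _ : bool => setT).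
have [_ uniq] := univ bool setT indiscrete (fun=> false) (fun=> false)
  (least_nbhd_pstop (fun _ => I)) (cont_indiscrete _ Sa_pstop.1)
  (cont_indiscrete _ (topc_conv _)) (fun _ _ => erefl).
suff : false = ~~ `[< (Sa `|` Phi @` disk n) y >] by rewrite asboolF.
apply: (uniq (fun=> false) (fun z => ~~ `[< (Sa `|` Phi @` disk n) z >])) Sby.
- by split; [exact: cont_indiscrete Sb_pstop.1 | by []].
split; first exact: cont_indiscrete Sb_pstop.1.
by split=> [z Saz|v dv]; rewrite asboolT //; [left | right; exists v].
Qed.

(* Test against the Sierpinski space: the map on D^n that is false exactly at
   [w] is continuous and true on the sphere. *)
Lemma attach_interior w : odisk n w ->
  ~ Sa (Phi w) /\ (forall u, disk n u -> Phi u = Phi w -> u = w).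
Proof.
have [_ [_ [_ [_ [_ univ]]]]] := attach; move=> ow.
pose sierpinski := least_nbhd_conv (fun b : bool => [set c | b -> c]).
pose h u := `[< u <> w >].
have hc : cont (disk n) (topc (disk n)) setT sierpinski h.
  apply: cont_least_nbhd (topc_conv _) _ => F v [pF [_ [_ nF]]].
  have [->|vw] := pselect (v = w).
    by apply: pfilterS pF _ (pfilterT pF) => u _; rewrite /h /= asboolF.
  have /nF : nbhs v (~` [set w]).
    by apply: nbhs_setC_subset1 (@rV_accessible R n) _ vw => a b -> ->.
  by apply: pfilterS pF _ => u uw _; apply/asboolP.
have gc : cont Sa ca setT sierpinski (fun=> true).
  apply: cont_least_nbhd Sa_pstop.1 _ => F x cF.
  by have [pF _ _] := pstop_conv Sa_pstop cF; apply: pfilterS pF _ (pfilterT pF).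
have hphi v : sphere n v -> h v = true.
  by move=> sv; apply/asboolP => vw; apply: (sphere_odisk sv); rewrite vw.
have [[k [_ [kSa kdisk]]] _] :=
  univ bool setT sierpinski _ h (least_nbhd_pstop (fun _ => id)) gc hc hphi.
have kw : k (Phi w) = false.
  by rewrite kdisk; [rewrite /h asboolF | exact: odisk_disk].
split=> [/kSa|u du e]; first by rewrite kw.
by apply: contrapT => uw; move: (kdisk u du); rewrite e kw /h asboolT.
Qed.

Section ToLeastNbhd.
Variable N : T -> set T.
Hypothesis N_refl : forall x, N x x.
Local Notation L := (least_nbhd_conv N).

Lemma attach_cont_id :
  cont Sa ca setT L id -> cont (disk n) (topc (disk n)) setT L Phi ->
  cont Sb cb setT L id.
Proof.
have [_ [_ [_ [_ [Phi_phi univ]]]]] := attach; move=> Sa_cont Phi_cont.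
have [[k [kc [kSa kdisk]]] _] :=
  univ T setT L id Phi (least_nbhd_pstop N_refl) Sa_cont Phi_cont Phi_phi.
apply: cont_least_nbhd_id Sb_pstop.1 kc _ => y /attach_cover[/kSa //|[v dv <-]].
exact: kdisk.
Qed.

End ToLeastNbhd.
End Attaching.

Lemma colim_cont_id Ix T lt (J : set Ix) (S : Ix -> set T) c Sb cb (N : T -> set T) :
  (forall x, N x x) ->
  (forall i, J i -> is_pstop (S i) (c i)) -> is_pstop Sb cb ->
  is_colim lt J S c Sb cb ->
  (forall i, J i -> cont (S i) (c i) setT (least_nbhd_conv N) id) ->
  cont Sb cb setT (least_nbhd_conv N) id.
Proof.
move=> N_refl S_pstop Sb_pstop colim S_cont; have [_ univ] := colim.
have [[k [kc kS]] _] := univ T setT (least_nbhd_conv N) (fun=> id)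
  (least_nbhd_pstop N_refl) S_cont (fun _ _ _ _ _ _ _ => erefl).
apply: cont_least_nbhd_id Sb_pstop.1 kc _ => y.
by move=> /(colim_cover S_pstop Sb_pstop colim)[i Ji Siy]; exact: (kS i Ji y Siy).
Qed.

(* Continuity of [id] into [least_nbhd_conv (discrete_nbhd S)] says that [S]
   is closed and discrete. *)
Definition discrete_nbhd {T} (S : set T) (y : T) : set T := ~` (S `\ y).

Lemma discrete_nbhd_refl T (S : set T) y : discrete_nbhd S y y.
Proof. by move=> [_]; apply. Qed.

Lemma cell_discrete_cont (R : realType) T n (S : set T) (phi Phi : 'rV[R]_n -> T) :
  cont (sphere n) (topc (sphere n)) setT (least_nbhd_conv (discrete_nbhd S)) phi ->
  (forall v, sphere n v -> Phi v = phi v) ->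
  is_subset1 [set u | odisk n u /\ S (Phi u)] ->
  cont (disk n) (topc (disk n)) setT (least_nbhd_conv (discrete_nbhd S)) Phi.
Proof.
move=> [_ phi_cont] Phi_phi sE.
apply: cont_least_nbhd (topc_conv _) _ => F v [pF [Fd [dv nF]]].
set E := [set u | _ /\ _] in sE.
have acc := @rV_accessible R n.
have [sv|ov] := disk_sphere_odisk dv.
  have [_ /= phiN] := phi_cont _ _ (topc_within sv).
  have nE : nbhs v (~` E) by apply: nbhs_setC_subset1 => // -[/(sphere_odisk sv)].
  apply: pfilterS pF _ (pfilterI pF (pfilterI pF (nF _ phiN) (nF _ nE)) Fd).
  move=> u [[phiNu nEu] du]; have [su|ou] := disk_sphere_odisk du.
    by rewrite /= !Phi_phi //; exact: phiNu.
  by move=> [SPu _]; exact: nEu.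
have nE : nbhs v (~` (E `\ v)).
  by apply: nbhs_setC_subset1 => // [a b [Ea _] [Eb _]|[_]]; [exact: sE | apply].
have no : nbhs v (odisk n) by apply: open_nbhs_nbhs; split => //; exact: odisk_open.
apply: pfilterS pF _ (pfilterI pF (nF _ no) (nF _ nE)) => u [ou nEu] [SPu neq].
by apply: nEu; split=> [|uv]; [split | apply: neq; rewrite uv].
Qed.

Section CellComplex.
Variables (R : realType) (T : Type) (cY : convT T) (X : set T).
Variable P : rel_cell_complex R cY X.
Local Notation ilt := (@ilt _ _ _ _ P).
Local Notation stage := (@stage _ _ _ _ P).
Local Notation sconv := (@sconv _ _ _ _ P).

Lemma stage_sub i j : i = j \/ ilt i j -> stage i `<=` stage j.
Proof. by case=> [->//|/stage_incl[]]. Qed.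

Lemma base_sub_stage i : X `<=` stage i.
Proof.
move=> x Xx; apply: (@stage_sub (i0 P)); first by case: (i0_least i); auto.
by rewrite stage0_set.
Qed.

Lemma cell_interior_new i j y : is_pred ilt i j -> cell_interior P j y ->
  stage j y /\ ~ stage i y.
Proof.
move=> ij [u ou <-]; have att := succ_step ij.
have [_ [_ [_ [[Phi_stage _] _]]]] := att.
split; first exact/Phi_stage/odisk_disk.
by have [] := attach_interior (stage_pstop i) att ou.
Qed.

Lemma chr_inj_interior i j u w : is_pred ilt i j -> odisk (dim P j) w ->
  disk (dim P j) u -> chr P j u = chr P j w -> u = w.
Proof.
move=> ij ow; have [_] := attach_interior (stage_pstop i) (succ_step ij) ow.
exact.
Qed.

Lemma cell_interior_disjoint j j' y : is_cell_idx P j -> is_cell_idx P j' ->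
  cell_interior P j y -> cell_interior P j' y -> j = j'.
Proof.
move=> [i ij] [i' ij'] /(cell_interior_new ij)[jy iy] /(cell_interior_new ij')[j'y i'y].
have [jj'|[//|j'j]] := ilt_total j j'; exfalso.
  by apply: i'y; apply: stage_sub (ij'.2 j jj') _ jy.
by apply: iy; apply: stage_sub (ij.2 j' j'j) _ j'y.
Qed.

Lemma cell_interior_base j y : is_cell_idx P j -> cell_interior P j y -> ~ X y.
Proof.
by move=> [i ij] /(cell_interior_new ij)[_ iy] /(base_sub_stage i).
Qed.

Section Transversal.
Variable S : set T.
Hypothesis S_cells : S `<=` \bigcup_(j in is_cell_idx P) cell_interior P j.
Hypothesis S_sparse : forall j, is_cell_idx P j -> is_subset1 (cell_interior P j `&` S).
Local Notation L := (least_nbhd_conv (discrete_nbhd S)).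

Lemma base_discrete_cont : cont (stage (i0 P)) (sconv (i0 P)) setT L id.
Proof.
apply: cont_least_nbhd (stage_pstop _).1 _ => F y cF.
have [pF _ _] := pstop_conv (stage_pstop _) cF.
have [FX _] := (stage0_conv P F y).1 cF.
apply: pfilterS pF _ FX => x Xx [Sx _].
by have [j cj jx] := S_cells Sx; exact: cell_interior_base cj jx Xx.
Qed.

Lemma succ_discrete_cont i j : is_pred ilt i j ->
  cont (stage i) (sconv i) setT L id -> cont (stage j) (sconv j) setT L id.
Proof.
move=> ij stage_i_cont; have att := succ_step ij.
have [_ [_ [phi_cont [_ [Phi_phi _]]]]] := att.
have chr_cont : cont (disk (dim P j)) (topc (disk (dim P j))) setT L (chr P j).
  apply: cell_discrete_cont Phi_phi _ => [|u u' [ou Su] [ou' Su']].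
    exact: cont_comp phi_cont stage_i_cont.
  apply: (chr_inj_interior ij ou' (odisk_disk ou)).
  by apply: (S_sparse (ex_intro _ i ij)); split=> //; [exists u | exists u'].
exact (attach_cont_id (stage_pstop i) (stage_pstop j) att (@discrete_nbhd_refl _ S)
  stage_i_cont chr_cont).
Qed.

Lemma stage_discrete_cont i : cont (stage i) (sconv i) setT L id.
Proof.
elim/(well_founded_ind (@ilt_wf _ _ _ _ P)): i => j IH.
have [->|j0] := pselect (j = i0 P); first exact: base_discrete_cont.
have [[i ij]|nopred] := pselect (exists i, is_pred ilt i j).
  exact: succ_discrete_cont ij (IH i ij.1).
have limit : forall i, ~ is_pred ilt i j by move=> i ij; apply: nopred; exists i.
exact: colim_cont_id (@discrete_nbhd_refl _ S) (fun i _ => stage_pstop i)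
  (stage_pstop j) (limit_step j0 limit) IH.
Qed.

Lemma final_discrete_cont : is_pstop setT cY -> cont setT cY setT L id.
Proof.
move=> Y_pstop; exact: colim_cont_id (@discrete_nbhd_refl _ S) (fun i _ => stage_pstop i)
  Y_pstop (final_colim P) (fun i _ => stage_discrete_cont i).
Qed.

End Transversal.
End CellComplex.

Lemma cofinite_pfilter T (S : set T) : infinite_set S ->
  pfilter [set Z | exists2 E, finite_set E & S `\` E `<=` Z].
Proof.
move=> infS; split; first by exists set0; [exact: finite_set0 |].
split.
  move=> [E finE SE]; apply: infS; apply: sub_finite_set finE => y Sy.
  by apply: contrapT => nEy; exact: SE y (conj Sy nEy).
split=> [Z1 Z2 [E1 fin1 SZ1] [E2 fin2 SZ2]|Z1 Z2 Z12 [E finE SZ]].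
  exists (E1 `|` E2); first by rewrite finite_setU.
  move=> y [Sy nE]; split; [apply: SZ1 | apply: SZ2]; split=> // ?.
    by apply: nE; left.
  by apply: nE; right.
by exists E => // y /SZ /Z12.
Qed.

Lemma compact_discrete_finite T (c : convT T) (C S : set T) :
  compactP c C -> S `<=` C ->
  cont setT c setT (least_nbhd_conv (discrete_nbhd S)) id -> finite_set S.
Proof.
move=> compactC SC [_ S_discrete]; apply: contrapT => infS.
have [U UU cofinU] := pfilter_ultra (cofinite_pfilter infS).
have [x [_ [_ Ux]]] : exists x, subsp c C U x.
  by apply: compactC => //; apply: cofinU; exists set0 => // y [/SC].
have [[pU _] [_ USx]] := (UU, S_discrete _ _ Ux).
have USx' : U (S `\ x) by apply: cofinU; exists [set x] => //; exact: finite_set1.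
apply: (pfilter_set0 pU); apply: pfilterS pU _ (pfilterI pU USx USx').
by move=> y [nSx Sxy]; exact: nSx Sxy.
Qed.

Lemma infinite_cells_transversal R T cY X (P : rel_cell_complex R cY X) (C : set T) :
  infinite_set [set j | is_cell_idx P j /\ cell_interior P j `&` C !=set0] ->
  exists S, [/\ S `<=` C, infinite_set S,
    S `<=` \bigcup_(j in is_cell_idx P) cell_interior P j &
    forall j, is_cell_idx P j -> is_subset1 (cell_interior P j `&` S)].
Proof.
set J := [set j | _] => infJ.
have [j0 [_ [t0 _]]] := infinite_setN0 infJ.
have /choice[x xJ] : forall j, exists y, J j -> (cell_interior P j `&` C) y.
  move=> j; have [[_ [y Iy]]|nJ] := pselect (J j); first by exists y.
  by exists t0 => /nJ.
have x_inj : {in J &, injective x}.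
  move=> j j' /set_mem Jj /set_mem Jj' e.
  apply: (cell_interior_disjoint Jj.1 Jj'.1 (xJ j Jj).1).
  by rewrite e; exact: (xJ j' Jj').1.
exists (x @` J); split.
- by move=> _ [j Jj <-]; exact: (xJ j Jj).2.
- move=> finS; apply: infJ; rewrite -(injpinv_image (fun=> j0) x_inj).
  exact: finite_image.
- by move=> _ [j Jj <-]; exists j; [exact: Jj.1 | exact: (xJ j Jj).1].
move=> j cj y y' [Ik [k Jk ky]] [Ik' [k' Jk' k'y']]; subst y y'.
have -> := cell_interior_disjoint Jk.1 cj (xJ k Jk).1 Ik.
by rewrite (cell_interior_disjoint Jk'.1 cj (xJ k' Jk').1 Ik').
Qed.

Theorem mainTheorem8 (R : realType) (T : Type) (cY : convT T) (X : set T)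
  (HY : is_pstop setT cY) (P : rel_cell_complex R cY X) (C : set T) :
  compactP cY C ->
  finite_set [set j : idx P | is_cell_idx P j /\ cell_interior P j `&` C !=set0].
Proof.
move=> compactC; apply: contrapT.
move=> /infinite_cells_transversal[S [SC infS S_cells S_sparse]].
apply: infS; apply: (compact_discrete_finite compactC SC).
exact: final_discrete_cont S_cells S_sparse HY.
Qed.
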